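(* Let $C\subseteq\mathbb F_2^n$ be a classical linear code with dual code $C^\perp$, and let $\Gamma\subseteq 2^{[n]}$ be a set of channel supports. Let $\hat\Gamma=\{a\neq\emptyset: a\subseteq\gamma \text{ for some }\gamma\in\Gamma\}$ and let $D$ be the $|C^\perp\setminus\{0\}|\times|\hat\Gamma|$ real matrix with rows indexed by $s\in C^\perp\setminus\{0\}$, columns indexed by $a\in\hat\Gamma$, and entries $D[s,a]=1$ if $a\subseteq s$ and $D[s,a]=0$ otherwise. Then $D$ has full rank (rank equal to $|\hat\Gamma|$) if and only if $\gamma_1\cup\gamma_2\in\Delta^{D}$ for all $\gamma_1,\gamma_2\in\Gamma$.
   Context: A classical code $C$ is a subspace of $\mathbb F_2^n$ with parity check matrix $H$ whose rows span $C^\perp=\{a\in\mathbb F_2^n: a\cdot c=0\ \forall c\in C\}$; the syndrome of $e\in\mathbb F_2^n$ is $\mathrm{syn}(e)=He$. Vectors in $\mathbb F_2^n$ are identified with their support sets in $[n]$ (so $a\subseteq s$ means $\mathrm{supp}(a)\subseteq\mathrm{supp}(s)$). Define $\Delta^{D}=\{\gamma\subseteq[n]: \mathrm{syn}(e)\neq0 \text{ for all nonzero } e \text{ with } \mathrm{supp}(e)\subseteq\gamma\}$. *)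

From HB Require Import structures.
From mathcomp Require Import all_boot all_order all_algebra.
Set Implicit Arguments. Unset Strict Implicit. Unset Printing Implicit Defensive.
Import GRing.Theory Num.Theory.
Local Open Scope ring_scope.

Definition supp (n : nat) (v : 'rV['F_2]_n) : {set 'I_n} :=
  [set i | v 0 i != 0].

(* Syndrome of e w.r.t. the parity check matrix H (rows of H span C^perp). *)
Definition syn (m n : nat) (H : 'M['F_2]_(m, n)) (e : 'rV['F_2]_n) : 'cV['F_2]_m :=
  H *m e^T.

Definition Cperp (m n : nat) (H : 'M['F_2]_(m, n)) : {set 'rV['F_2]_n} :=
  [set s : 'rV['F_2]_n | (s <= H)%MS].

Definition Cperp_nz (m n : nat) (H : 'M['F_2]_(m, n)) : {set 'rV['F_2]_n} :=
  Cperp H :\ 0.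

Definition DeltaD (m n : nat) (H : 'M['F_2]_(m, n)) : {set {set 'I_n}} :=
  [set g : {set 'I_n} |
     [forall e : 'rV['F_2]_n, (e != 0) && (supp e \subset g) ==> (syn H e != 0)]].

Definition Gamma_hat (n : nat) (Gamma : {set {set 'I_n}}) : {set {set 'I_n}} :=
  [set a : {set 'I_n} | (a != set0) && [exists g in Gamma, a \subset g]].

Definition Dmat (R : nzRingType) (m n : nat) (H : 'M['F_2]_(m, n))
    (Gamma : {set {set 'I_n}}) :
    'M[R]_(#|Cperp_nz H|, #|Gamma_hat Gamma|) :=
  \matrix_(i < #|Cperp_nz H|, j < #|Gamma_hat Gamma|)
     (if enum_val j \subset supp (enum_val i) then 1 else 0).

From HB Require Import structures.
From mathcomp Require Import all_boot all_order all_algebra.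
Import GRing.Theory Num.Theory.
Set Implicit Arguments. Unset Strict Implicit. Unset Printing Implicit Defensive.
Local Open Scope ring_scope.

(* A support S lies in DeltaD H exactly when every pattern on S is the restriction of a
   codeword of C^perp.  If all unions g1 :|: g2 have this property, a kernel vector u of D
   vanishes: for a in Gamma_hat maximal with u a != 0, weight the equations by the character
   s |-> (-1)^(sum_(k in a) s_k) and sum over C^perp; translating by a codeword equal to the
   indicator of some i in a :\: a' on g :|: g' cancels every column a' not containing a, and
   what is left is a nonzero multiple of u a.  Conversely, a nonzero e with H e = 0 and
   supp e in g1 :|: g2 splits as b1 in g1 and b2 in g2 with equal parities on every codeword;
   since sum_(set0 != t \subset b, t \subset s) (-2)^|t| = (-1)^|b :&: s| - 1, the vector
   t |-> [t \subset b1] (-2)^|t| - [t \subset b2] (-2)^|t| is a nonzero kernel vector of D. *)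

Lemma F2P (x : 'F_2) : x = 0 \/ x = 1.
Proof. by case: x => [[|[|k]] //= ?]; [left | right]; apply: val_inj. Qed.

Lemma F2_oppr (x : 'F_2) : - x = x.
Proof. exact/oppr_pchar2/pchar_Fp. Qed.

Section SignCharacter.
Variable R : pzRingType.

Definition chi (x : 'F_2) : R := if x == 0 then 1 else -1.

Lemma chi0 : chi 0 = 1. Proof. by rewrite /chi eqxx. Qed.

Lemma chiN0 x : x != 0 -> chi x = -1. Proof. by rewrite /chi => /negbTE ->. Qed.

Lemma chiD x y : chi (x + y) = chi x * chi y.
Proof.
by case: (F2P x) (F2P y) => -> [] ->; rewrite /chi ?addr0 ?add0r /= ?mulrNN ?mulr1 ?mul1r.
Qed.

Lemma chiD1 x : chi (x + 1) = - chi x.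
Proof. by rewrite chiD /chi /= mulrN1. Qed.

End SignCharacter.

Lemma sum_subset_exp (T : finType) (R : comPzSemiRingType) (A : {set T}) (x : R) :
  \sum_(J : {set T} | J \subset A) x ^+ #|J| = (1 + x) ^+ #|A|.
Proof.
rewrite -prodr_const [RHS]big_mkcond /=.
rewrite [RHS](eq_bigr (fun i => (if i \in A then x else 0) + 1)) => [|i _]; last first.
  by case: (i \in A); rewrite ?add0r // addrC.
rewrite bigA_distr [LHS]big_mkcond /=; apply: eq_bigr => J _; rewrite -big_mkcond /=.
case: ifP => [/subsetP JA | /negbT/subsetPn[i iJ niA]].
  by rewrite -prodr_const; apply: eq_bigr => i /JA ->.
by rewrite (bigD1 i) //= (negbTE niA) mul0r.
Qed.

Lemma submxDr (F : fieldType) (p q r : nat) (A : 'M[F]_(p, r)) (s t : 'M_(q, r)) :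
  (t <= A)%MS -> ((s + t)%R <= A)%MS = (s <= A)%MS.
Proof.
move=> tA; apply/idP/idP => [stA | sA]; last exact: addmx_sub sA tA.
by rewrite -(addrK t s); apply: addmx_sub stA _; rewrite eqmx_opp.
Qed.

Section Parity.
Variable n : nat.
Implicit Types (a : {set 'I_n}) (e s t : 'rV['F_2]_n).

Lemma supp_eq0 e : (supp e == set0) = (e == 0).
Proof.
apply/eqP/eqP => [e0 | ->]; last by apply/setP => k; rewrite !inE mxE eqxx.
apply/rowP => k; rewrite mxE; apply/eqP; apply: contraT => ek.
by have := in_set0 k; rewrite -e0 inE ek.
Qed.

Definition parity a s : 'F_2 := \sum_(k in a) s 0 k.

Lemma parityD a s t : parity a (s + t) = parity a s + parity a t.
Proof. by rewrite /parity -big_split; apply: eq_bigr => k _; rewrite mxE. Qed.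

Lemma parity_supp_mul e s : parity (supp e) s = (s *m e^T) 0 0.
Proof.
rewrite mxE /parity big_mkcond; apply: eq_bigr => k _; rewrite inE mxE.
by case: (F2P (e 0 k)) => ->; rewrite ?eqxx ?mulr0 ?mulr1.
Qed.

Lemma chi_parity (R : comPzRingType) a s : chi R (parity a s) = (-1) ^+ #|a :&: supp s|.
Proof.
rewrite /parity (big_morph _ (@chiD R) (chi0 R)) (big_setID (supp s)) /=.
rewrite (eq_bigr (fun=> -1)) => [|k /setIP[_]]; last by rewrite inE; apply: chiN0.
rewrite prodr_const big1 ?mulr1 // => k /setDP[_].
by rewrite inE negbK => /eqP ->; apply: chi0.
Qed.

Lemma sum_subset_supp_exp (R : comPzRingType) a s :
  \sum_(J : {set 'I_n} | (J \subset a) && (J \subset supp s)) (-2 : R) ^+ #|J|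
  = chi R (parity a s).
Proof.
rewrite (eq_bigl (fun J : {set 'I_n} => J \subset a :&: supp s)) => [|J]; last first.
  by rewrite subsetI.
by rewrite sum_subset_exp chi_parity -[2]/(1 + 1)%:R natrD opprD addrA subrr sub0r.
Qed.

End Parity.

Section ParityCheck.
Variables (m n : nat) (H : 'M['F_2]_(m, n)).
Implicit Types (a g S : {set 'I_n}) (e s t : 'rV['F_2]_n).

Lemma DeltaDP g :
  reflect (forall e, supp e \subset g -> syn H e = 0 -> e = 0) (g \in DeltaD H).
Proof.
rewrite inE; apply: (iffP forallP) => [DeltaD_g e eg He | inj_g e].
  by apply/eqP; apply: contraT => e0; have := DeltaD_g e; rewrite e0 eg He eqxx.
by apply/implyP => /andP[e0 eg]; apply: contra e0 => /eqP He; apply/eqP/inj_g.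
Qed.

Lemma DeltaDPn g :
  reflect (exists e, [/\ e != 0, supp e \subset g & syn H e = 0]) (g \notin DeltaD H).
Proof.
rewrite inE negb_forall; apply: (iffP existsP) => -[e]; last first.
  by case=> e0 eg He; exists e; rewrite e0 eg He eqxx.
by rewrite negb_imply negbK => /andP[/andP[e0 eg] /eqP He]; exists e.
Qed.

Lemma DeltaD_interpolate S t : S \in DeltaD H ->
  exists2 s : 'rV['F_2]_n, (s <= H)%MS & {in S, s 0 =1 t 0}.
Proof.
move/DeltaDP => inj_S.
pose P : 'M['F_2]_n := diag_mx (\row_k (k \in S)%:R).
pose A := H *m P.
have P_coker : P *m cokermx A = 0.
  apply/matrixP => i j; pose e := (col j (P *m cokermx A))^T.
  have eS : supp e \subset S.
    apply/subsetP => k; rewrite inE /e /P 2!mxE mul_diag_mx !mxE.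
    by case: (k \in S) => //; rewrite mul0r eqxx.
  have He : syn H e = 0.
    by rewrite /syn trmxK colE mulmxA (mulmxA H P) -/A mulmx_coker mul0mx.
  by have /matrixP/(_ 0 i) := inj_S e eS He; rewrite !mxE.
have : (t *m P <= A)%MS by rewrite submxE -mulmxA P_coker mulmx0.
case/submxP => D tP; exists (D *m H); first exact: submxMl.
move=> j jS; move/matrixP/(_ 0 j): tP.
by rewrite /A mulmxA !mul_mx_diag !mxE jS !mulr1.
Qed.

Lemma parity_supp_syn0 e s : syn H e = 0 -> (s <= H)%MS -> parity (supp e) s = 0.
Proof.
by move=> He /submxP[D ->]; rewrite parity_supp_mul -mulmxA -/(syn H e) He mulmx0 mxE.
Qed.

Lemma sum_chi_parity_eq0 (R : numDomainType) S a0 a :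
  S \in DeltaD H -> a0 \subset S -> a \subset S -> ~~ (a0 \subset a) ->
  \sum_(s | (s <= H)%MS && (a \subset supp s)) chi R (parity a0 s) = 0.
Proof.
move=> SD a0S aS /subsetPn[i ia0 nia].
have [s0 s0H s0S] := DeltaD_interpolate (\row_k (k == i)%:R) SD.
have s0a k : k \in a -> s0 0 k = 0.
  move=> ka; rewrite s0S ?(subsetP aS) // mxE.
  by case: eqP => // ki; rewrite -ki ka in nia.
have par_s0 : parity a0 s0 = 1.
  rewrite /parity (bigD1 i) //= big1 => [|k /andP[ka0 ki]].
    by rewrite s0S ?(subsetP a0S) // mxE eqxx addr0.
  by rewrite s0S ?(subsetP a0S) // mxE (negbTE ki).
set X := LHS; suff: X = - X by move/eqP; rewrite -addr_eq0 -mulr2n mulrn_eq0 => /eqP.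
rewrite {1}/X (reindex_inj (addIr s0)) /= -sumrN.
apply: eq_big => [s | s _]; last by rewrite parityD par_s0 chiD1.
rewrite submxDr //; congr (_ && _).
by apply/subsetP/subsetP => a_s k ka; have := a_s k ka; rewrite !inE !mxE s0a ?addr0.
Qed.

Lemma sum_chi_parity_neq0 (R : numDomainType) g a :
  g \in DeltaD H -> a \subset g ->
  \sum_(s | (s <= H)%MS && (a \subset supp s)) chi R (parity a s) != 0.
Proof.
move=> gD ag.
rewrite (eq_bigr (fun=> (-1) ^+ #|a|)) => [|s /andP[_ a_s]]; last first.
  by rewrite chi_parity (setIidPl a_s).
rewrite sumr_const mulrn_eq0 signr_eq0 orbF -lt0n.
have [s sH s1] := DeltaD_interpolate (const_mx 1) gD.
apply/card_gt0P; exists s; rewrite unfold_in /= sH.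
by apply/subsetP => k ak; rewrite inE s1 ?(subsetP ag) // mxE.
Qed.

End ParityCheck.

Section Columns.
Variables (R : numFieldType) (m n : nat) (H : 'M['F_2]_(m, n)).
Variable Gamma : {set {set 'I_n}}.
Implicit Types (a b g t : {set 'I_n}) (s : 'rV['F_2]_n) (u : {set 'I_n} -> R).
Local Notation Ghat := (Gamma_hat Gamma).

Lemma Gamma_hatP a :
  reflect (a != set0 /\ exists2 g, g \in Gamma & a \subset g) (a \in Ghat).
Proof.
rewrite inE; apply: (iffP andP) => -[a0 Ga]; split=> //.
  by case/exists_inP: Ga => g; exists g.
by case: Ga => g gG ag; apply/exists_inP; exists g.
Qed.

(* The entry in row s of D applied to a coefficient vector, indexed by the sets of
   Gamma_hat themselves rather than by their enumeration. *)
Definition Dmul u s : R := \sum_(a in Ghat | a \subset supp s) u a.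

Lemma Dmul0 u : Dmul u 0 = 0.
Proof.
have /eqP supp0 : supp (0 : 'rV['F_2]_n) == set0 by rewrite supp_eq0.
rewrite /Dmul big_pred0 // => a; rewrite supp0 subset0.
by case: (boolP (a \in Ghat)) => // /Gamma_hatP[/negbTE ->].
Qed.

Lemma mul_Dmat_tr_eq0 (v : 'rV[R]_#|Ghat|) u :
  (forall j, v 0 j = u (enum_val j)) ->
  v *m (Dmat R H Gamma)^T = 0 <-> forall s, (s <= H)%MS -> Dmul u s = 0.
Proof.
move=> vu.
have vD i : (v *m (Dmat R H Gamma)^T) 0 i = Dmul u (enum_val i).
  rewrite mxE /Dmul big_mkcondr /= [RHS]big_enum_val; apply: eq_bigr => j _.
  by rewrite !mxE vu; case: ifP; rewrite ?mulr1 ?mulr0.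
have Cperp_sub (i : 'I_#|Cperp_nz H|) : (enum_val i <= H)%MS.
  by have := enum_valP i; rewrite !inE => /andP[].
split=> [vD0 s sH | Du]; last by apply/rowP => i; rewrite vD mxE Du.
have [-> | s0] := eqVneq s 0; first exact: Dmul0.
have sC : s \in Cperp_nz H by rewrite !inE s0.
by rewrite -(enum_rankK_in sC sC) -vD vD0 mxE.
Qed.

Definition weight b t : R := if t \subset b then (-2) ^+ #|t| else 0.

Lemma weightB_neq0 b b' t :
  t \subset b -> ~~ (t \subset b') -> weight b t - weight b' t != 0.
Proof.
by move=> tb ntb'; rewrite /weight tb (negbTE ntb') subr0 expf_neq0 // oppr_eq0 pnatr_eq0.
Qed.

Lemma Dmul_weight b g s : g \in Gamma -> b \subset g ->
  Dmul (weight b) s = chi R (parity b s) - 1.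
Proof.
move=> gG bg.
rewrite -sum_subset_supp_exp (bigD1 set0) ?sub0set //= cards0 expr0 [1 + _]addrC addrK.
rewrite /Dmul /weight -big_mkcondr; apply: eq_bigl => a /=.
have [ab | _] := boolP (a \subset b); rewrite ?andbF ?andbT //= andbC; congr (_ && _).
apply/Gamma_hatP/idP => [[] // | a0]; split=> //.
by exists g => //; apply: subset_trans ab bg.
Qed.

Lemma Dmul_kernel g1 g2 :
  g1 \in Gamma -> g2 \in Gamma -> g1 :|: g2 \notin DeltaD H ->
  exists u, (exists2 a, a \in Ghat & u a != 0) /\ forall s, (s <= H)%MS -> Dmul u s = 0.
Proof.
move=> g1G g2G /DeltaDPn[e [e0 eg He]].
set b1 := supp e :&: g1; set b2 := supp e :\: g1.
have b1g1 : b1 \subset g1 by apply: subsetIr.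
have b2g2 : b2 \subset g2.
  apply/subsetP => k /setDP[ke kg1].
  by have := subsetP eg k ke; rewrite in_setU (negbTE kg1).
exists (fun t => weight b1 t - weight b2 t); split.
  have [b1_0 | /set0Pn[k kb1]] := eqVneq b1 set0.
    have b2_e : b2 = supp e by rewrite -(setID (supp e) g1) -/b1 b1_0 set0U.
    have b2_0 : b2 != set0 by rewrite b2_e supp_eq0.
    exists b2; first by apply/Gamma_hatP; split=> //; exists g2.
    by rewrite -opprB oppr_eq0 weightB_neq0 // b1_0 subset0.
  have b1_0 : b1 != set0 by apply/set0Pn; exists k.
  exists b1; first by apply/Gamma_hatP; split=> //; exists g1.
  rewrite weightB_neq0 //; apply/subsetPn; exists k => //.
  by move: kb1; rewrite !inE => /andP[_ ->].
move=> s sH.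
have b1_b2 : parity b1 s = parity b2 s.
  have : parity b1 s + parity b2 s = 0.
    by rewrite -(parity_supp_syn0 He sH) /parity [RHS](big_setID g1).
  by move/eqP; rewrite addr_eq0 F2_oppr => /eqP.
have -> : Dmul (fun t => weight b1 t - weight b2 t) s
          = Dmul (weight b1) s - Dmul (weight b2) s by rewrite /Dmul -sumrB.
by rewrite (Dmul_weight _ g1G b1g1) (Dmul_weight _ g2G b2g2) b1_b2 subrr.
Qed.

Hypothesis DeltaD_union :
  forall g1 g2, g1 \in Gamma -> g2 \in Gamma -> g1 :|: g2 \in DeltaD H.

Lemma Dmul_eq0_proper u a0 :
  (forall s, (s <= H)%MS -> Dmul u s = 0) -> a0 \in Ghat ->
  {in Ghat, forall a, a0 \proper a -> u a = 0} -> u a0 = 0.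
Proof.
move=> Du a0G u_sup; have /Gamma_hatP[_ [g0 g0G a0g0]] := a0G.
have g0D : g0 \in DeltaD H by rewrite -[g0]setUid DeltaD_union.
pose c a := \sum_(s | (s <= H)%MS && (a \subset supp s)) chi R (parity a0 s).
have : \sum_(s | (s <= H)%MS) chi R (parity a0 s) * Dmul u s = \sum_(a in Ghat) c a * u a.
  rewrite /Dmul; under eq_bigr do rewrite mulr_sumr.
  rewrite (exchange_big_dep (mem Ghat)) => [|s a _ /andP[] //]; apply: eq_bigr => a aG.
  by rewrite /c mulr_suml; apply: eq_bigl => s; rewrite (_ : a \in Ghat).
rewrite big1 => [/esym | s /Du ->]; last by rewrite mulr0.
rewrite (bigD1 a0) //= big1 ?addr0 => [/eqP | a /andP[aG a_a0]].
  by rewrite mulf_eq0 (negbTE (sum_chi_parity_neq0 R g0D a0g0)) => /eqP.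
have [a0a | na0a] := boolP (a0 \subset a).
  by rewrite u_sup ?mulr0 // properEneq eq_sym a_a0.
have /Gamma_hatP[_ [g gG ag]] := aG.
have a0S : a0 \subset g0 :|: g by rewrite subsetU ?a0g0.
have aS : a \subset g0 :|: g by rewrite subsetU ?ag ?orbT.
by rewrite /c (sum_chi_parity_eq0 R (DeltaD_union g0G gG) a0S aS na0a) mul0r.
Qed.

Lemma Dmul_inj u :
  (forall s, (s <= H)%MS -> Dmul u s = 0) -> {in Ghat, forall a, u a = 0}.
Proof.
move=> Du a aG; apply/eqP; apply: contraT => ua.
pose P b := (b \in Ghat) && (u b != 0).
have Pa : P a by rewrite /P aG.
have [b /andP[bG ub] b_max] := arg_maxnP (fun b => #|b|) Pa.
rewrite (Dmul_eq0_proper Du bG) ?eqxx // in ub => c cG bc; apply/eqP; apply: contraT => uc.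
by have := b_max c; rewrite /P cG uc => /(_ isT) /=; rewrite leqNgt (proper_card bc).
Qed.

End Columns.

Unset Implicit Arguments.

Theorem theorem3 (R : realFieldType) (m n : nat) (H : 'M['F_2]_(m, n))
    (Gamma : {set {set 'I_n}}) :
  \rank (Dmat R H Gamma) = #|Gamma_hat Gamma| <->
  (forall g1 g2, g1 \in Gamma -> g2 \in Gamma -> g1 :|: g2 \in DeltaD H).
Proof.
rewrite -mxrank_tr; split=> [/eqP freeD g1 g2 g1G g2G | DeltaD_union].
  apply: contraT => /(Dmul_kernel R g1G g2G) [u [[a aG ua] Du]].
  have u0 : \row_j u (enum_val j) = 0 :> 'rV_#|Gamma_hat Gamma|.
    apply: (row_free_inj freeD); rewrite mul0mx.
    by apply/(mul_Dmat_tr_eq0 H (u := u)) => // j; rewrite mxE.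
  move/rowP/(_ (enum_rank_in aG a)): u0.
  by rewrite !mxE enum_rankK_in // => /eqP; rewrite (negbTE ua).
apply/eqP/inj_row_free => v vD; apply/rowP => j; rewrite mxE.
have jG := enum_valP j.
pose u a := v 0 (enum_rank_in jG a).
have vu j' : v 0 j' = u (enum_val j') by rewrite /u enum_valK_in.
by rewrite vu (Dmul_inj DeltaD_union) //; apply/(mul_Dmat_tr_eq0 H vu).
Qed.
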